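(* Let $P_1,P_2$ be probability measures on $(\Omega,\mathcal A)$, let $\delta_1,\delta_2\in(\tfrac12,1)$, and let $\bar{\mathbf C}\subseteq\bar{\mathcal A}$ be a C-class. If $\bar T(P_1,\delta_1)\cup\bar T(P_2,\delta_2)\subseteq\bar{\mathbf C}$, then $P_1=P_2$.
   Context: Let $(\Omega,\mathcal A)$ be a measurable space. For $n\ge1$, $\mathcal A^n$ is the product $\sigma$-algebra on $\Omega^n$; the extended event space is $\bar{\mathcal A}=\bigcup_{n\ge1}\mathcal A^n$, events tagged by their level $n$. For a probability measure $P$ on $\mathcal A$, $P^n$ is its $n$-fold product, $\bar P(A^{(n)})=P^n(A^{(n)})$ for $A^{(n)}\in\mathcal A^n$, and $\bar T(P,\delta)=\{A\in\bar{\mathcal A}:\bar P(A)\ge\delta\}$. A class $\bar{\mathbf C}\subseteq\bar{\mathcal A}$ is a C-class if for every $n\ge1$ the component $\mathcal C^{(n)}=\bar{\mathbf C}\cap\mathcal A^n$ satisfies: $\Omega^n\in\mathcal C^{(n)}$; if $A\in\mathcal C^{(n)}$, $B\in\mathcal A^n$, $A\subseteq B$ then $B\in\mathcal C^{(n)}$; $\mathcal C^{(n)}$ contains no two disjoint events. *)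

From HB Require Import structures.
From mathcomp Require Import all_boot all_order all_algebra.
From mathcomp Require Import all_classical all_reals all_analysis.
Set Implicit Arguments. Unset Strict Implicit. Unset Printing Implicit Defensive.
Import Order.TTheory GRing.Theory Num.Theory.
Local Open Scope classical_set_scope.
Local Open Scope ring_scope.
Local Open Scope ereal_scope.

(* Omega^n is modelled as [n.-tuple T], which MathComp-Analysis equips with
   the product sigma-algebra (generated by the coordinate projections). *)

(* n-fold product measure P^n, defined by iterated integration of sections:
   P^0 = Dirac at the empty tuple,
   P^(n+1)(A) = \int P(dx) P^n {t | x :: t \in A}. *)
Fixpoint pow_measure d (T : measurableType d) (R : realType)
    (P : probability T R) (n : nat) : set (n.-tuple T) -> \bar R :=
  match n return set (n.-tuple T) -> \bar R with
  | 0%N => fun A => if `[< A [tuple] >] then 1 else 0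
  | n'.+1 => fun A =>
      \int[P]_(x in [set: T])
        pow_measure P [set t : n'.-tuple T | A [tuple of x :: t]]
  end.

Definition C_class d (T : measurableType d)
    (C : forall n : nat, set (set (n.-tuple T))) : Prop :=
  forall n : nat, (1 <= n)%N ->
    (forall A, C n A -> measurable A) /\
    C n [set: n.-tuple T] /\
    (forall A B : set (n.-tuple T), C n A -> measurable B -> A `<=` B -> C n B) /\
    (forall A B : set (n.-tuple T), C n A -> C n B -> A `&` B !=set0).

Definition Tbar_sub d (T : measurableType d) (R : realType)
    (P : probability T R) (delta : R)
    (C : forall n : nat, set (set (n.-tuple T))) : Prop :=
  forall n : nat, (1 <= n)%N -> forall A : set (n.-tuple T),
    measurable A -> (delta%:E <= pow_measure P A) -> C n A.

From HB Require Import structures.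
From mathcomp Require Import all_boot all_order all_algebra.
From mathcomp Require Import all_classical all_reals all_analysis.
From mathcomp Require Import ring lra measurable_realfun.
Set Implicit Arguments.
Unset Strict Implicit.
Unset Printing Implicit Defensive.

Import Order.TTheory GRing.Theory Num.Theory.
Local Open Scope classical_set_scope.
Local Open Scope ring_scope.

(* If P1 A < P2 A for a measurable A, count the coordinates of a sample of
   size n that fall into A. Under P_i^n this count has law Binomial(n, P_i A),
   so by Chebyshev's inequality, for n large and c halfway between the two
   means, the event {count <= c} has P1^n-probability at least delta1 while its
   complement has P2^n-probability at least delta2. Both events then belong to
   the C-class although they are disjoint. *)

Section binomial_expect.
Variables (R : realType) (p : R).

(* [binomial_expect n f] is the expectation of [f X] for X ~ Binomial(n, p),
   computed by conditioning on the first trial, as in [pow_measure]. *)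
Fixpoint binomial_expect (n : nat) (f : R -> R) : R :=
  if n is n'.+1 then
    p * binomial_expect n' (fun r => f (1 + r)) + (1 - p) * binomial_expect n' f
  else f 0.

Lemma binomial_expectD n (f g : R -> R) (a b : R) :
  binomial_expect n (fun r => a * f r + b * g r) =
  a * binomial_expect n f + b * binomial_expect n g.
Proof.
elim: n f g => [//|n IH] f g /=.
rewrite (IH (fun r => f (1 + r)) (fun r => g (1 + r))) IH; ring.
Qed.

Lemma binomial_expect_cst n c : binomial_expect n (fun => c) = c.
Proof. by elim: n => [//|n IH] /=; rewrite IH; ring. Qed.

Lemma binomial_expect_sqr n c :
  binomial_expect n (fun r => (r + c) ^+ 2) =
  (n%:R * p + c) ^+ 2 + n%:R * p * (1 - p).
Proof.
elim: n c => [|n IH] c /=; first by rewrite !mul0r add0r addr0.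
under eq_fun do rewrite (addrC 1) -addrA.
by rewrite !IH -[n.+1]addn1 natrD; ring.
Qed.

Lemma binomial_expect_indicC n (S : set R) :
  binomial_expect n \1_(~` S) = 1 - binomial_expect n \1_S.
Proof.
have /esym := binomial_expectD n \1_S \1_(~` S) 1 1.
have indicU r : 1 * \1_S r + 1 * \1_(~` S) r = 1 :> R.
  by rewrite !mul1r indicC indicE; case: (r \in S); rewrite /= ?addr0 ?add0r.
under eq_fun do rewrite indicU.
by rewrite binomial_expect_cst !mul1r => E1; rewrite -E1; ring.
Qed.

Hypothesis p01 : 0 <= p <= 1.

Lemma binomial_expect_le n (f g : R -> R) :
  (forall r, f r <= g r) -> binomial_expect n f <= binomial_expect n g.
Proof.
have /andP[p0 p1] := p01.
elim: n f g => [|n IH] f g fg /=; first exact: fg.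
by rewrite lerD // ler_wpM2l ?subr_ge0 // IH.
Qed.

Lemma binomial_expect_ge0 n (f : R -> R) :
  (forall r, 0 <= f r) -> 0 <= binomial_expect n f.
Proof. by move=> f0; rewrite -(binomial_expect_cst n 0) binomial_expect_le. Qed.

Lemma binomial_chebyshev n (eps : R) (F : set R) : 0 < eps -> (0 < n)%N ->
  (forall r, F r -> n%:R * eps <= `|r - n%:R * p|) ->
  binomial_expect n \1_F <= (n%:R * eps ^+ 2)^-1.
Proof.
move=> eps0 n0 hF; have /andP[p0 p1] := p01.
have ne0 : 0 < n%:R * eps by rewrite mulr_gt0 ?ltr0n.
pose k := ((n%:R * eps) ^+ 2)^-1.
apply: (@le_trans _ _ (binomial_expect n (fun r => k * (r - n%:R * p) ^+ 2 + 0 * 0))).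
  apply: binomial_expect_le => r; rewrite mulr0 addr0 indicE.
  case: (boolP (r \in F)) => [/set_mem/hF rF | _]; last by rewrite mulr_ge0 ?invr_ge0 ?sqr_ge0.
  rewrite /= /k ler_pdivlMl ?exprn_gt0 // mulr1 -(real_normK (num_real (r - _))).
  by rewrite lerXn2r ?nnegrE // ltW.
rewrite (binomial_expectD n (fun r => (r - n%:R * p) ^+ 2) (fun => 0)).
rewrite binomial_expect_sqr subrr expr0n /= add0r mul0r addr0.
have -> : k * (n%:R * p * (1 - p)) = (n%:R * eps ^+ 2)^-1 * (p * (1 - p)).
  by rewrite /k; field; rewrite pnatr_eq0 -lt0n n0 /= gt_eqF.
by rewrite ler_piMr ?invr_ge0 ?mulr_ge0 ?sqr_ge0 ?ltr0n ?ltW //; nra.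
Qed.

End binomial_expect.

Lemma exists_natr_inv_le (R : realType) (a b : R) : 0 < a -> 0 < b ->
  exists2 n : nat, (0 < n)%N & (n%:R * a)^-1 <= b.
Proof.
move=> a0 b0; exists (Num.trunc (a * b)^-1).+1 => //.
have := truncnS_gt (a * b)^-1.
rewrite -[X in X < _]mul1r ltr_pdivrMr ?mulr_gt0 // => lt1.
by rewrite -[X in X <= _]mul1r ler_pdivrMr ?mulr_gt0 ?ltr0n // mulrC -mulrA ltW.
Qed.

Lemma binomial_threshold (R : realType) (p1 p2 d1 d2 : R) :
  0 <= p1 <= 1 -> 0 <= p2 <= 1 -> p1 < p2 -> d1 < 1 -> d2 < 1 ->
  exists n c, [/\ (0 < n)%N,
    d1 <= binomial_expect p1 n \1_[set r | r <= c] &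
    d2 <= binomial_expect p2 n \1_(~` [set r | r <= c])].
Proof.
move=> p1_01 p2_01 p12 d1_1 d2_1.
pose eps := (p2 - p1) / 2.
have eps0 : 0 < eps by rewrite divr_gt0 // subr_gt0.
have [n n0 small] : exists2 n : nat, (0 < n)%N &
    (n%:R * eps ^+ 2)^-1 <= 1 - Num.max d1 d2.
  by apply: exists_natr_inv_le; rewrite ?exprn_gt0 // subr_gt0 gt_max d1_1.
have [d1_max d2_max] : d1 <= Num.max d1 d2 /\ d2 <= Num.max d1 d2.
  by rewrite le_max lexx le_max lexx orbT.
pose c := n%:R * ((p1 + p2) / 2).
exists n, c; split => //.
- have : binomial_expect p1 n \1_(~` [set r | r <= c]) <= (n%:R * eps ^+ 2)^-1.
    apply: binomial_chebyshev => // r /= /negP; rewrite -ltNge => cr.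
    by rewrite ler_normr; apply/orP; left; rewrite /eps /c in cr *; lra.
  rewrite binomial_expect_indicC; lra.
- have : binomial_expect p2 n \1_[set r | r <= c] <= (n%:R * eps ^+ 2)^-1.
    apply: binomial_chebyshev => // r /= rc.
    by rewrite ler_normr; apply/orP; right; rewrite /eps /c in rc *; lra.
  rewrite binomial_expect_indicC; lra.
Qed.

Section pow_measure_count.
Context {d : measure_display} (T : measurableType d) (R : realType).

Definition count_in (A : set T) (t : seq T) : R := \sum_(x <- t) \1_A x.

Lemma measurable_count_in (A : set T) n : measurable A ->
  measurable_fun [set: n.-tuple T] (fun t : n.-tuple T => count_in A t).
Proof.
move=> mA; elim: n => [|n IH].
  rewrite (_ : (fun t => _) = cst 0); first exact: measurable_cst.
  by apply/funext => t; rewrite tuple0 /count_in big_nil.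
rewrite (_ : (fun t => _) = fun t : n.+1.-tuple T =>
    \1_A (thead t) + count_in A [tuple of behead t]).
  apply: measurable_funD; last exact: measurableT_comp IH (@measurable_behead _ T n).
  exact: measurableT_comp (measurable_indic mA) (measurable_tnth _).
by apply/funext => t; rewrite [in LHS](tuple_eta t) /count_in big_cons.
Qed.

Variable P : probability T R.

Lemma probability_fineK (A : set T) : measurable A -> (fine (P A))%:E = P A.
Proof. by move=> mA; rewrite fineK // fin_num_measure. Qed.

Lemma probability_fine01 (A : set T) : measurable A -> 0 <= fine (P A) <= 1.
Proof.
move=> mA; rewrite -!lee_fin probability_fineK //.
by rewrite measure_ge0 probability_le1.
Qed.

Lemma integral_indic_setC (A : set T) (a b : R) :
  measurable A -> 0 <= a -> 0 <= b ->
  (\int[P]_(x in [set: T]) ((a * \1_A x)%:E + (b * \1_(~` A) x)%:E) =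
   (a * fine (P A) + b * (1 - fine (P A)))%:E)%E.
Proof.
move=> mA a0 b0; have mAC := measurableC mA.
rewrite ge0_integralD //; last 4 first.
- by move=> x _; rewrite lee_fin mulr_ge0.
- by apply/measurable_EFinP/measurable_funM => //; exact: measurable_indic.
- by move=> x _; rewrite lee_fin mulr_ge0.
- by apply/measurable_EFinP/measurable_funM => //; exact: measurable_indic.
rewrite (integralZl_indic _ (fun => A)) //; last by move=> /lt_geF; rewrite a0.
rewrite (integralZl_indic _ (fun => ~` A)) //; last by move=> /lt_geF; rewrite b0.
rewrite !integral_indic // !setIT.
have -> : (P : {measure set T -> \bar R}) A = (fine (P A))%:E.
  by rewrite probability_fineK.
have -> : (P : {measure set T -> \bar R}) (~` A) = (1 - fine (P A))%:E.
  by rewrite EFinB probability_fineK //; exact: probability_setC.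
by rewrite -!EFinM -EFinD.
Qed.

Lemma pow_measure_count_in (A : set T) n (S : set R) : measurable A ->
  pow_measure P [set t : n.-tuple T | S (count_in A t)] =
  (binomial_expect (fine (P A)) n \1_S)%:E.
Proof.
move=> mA; have p01 := probability_fine01 mA.
elim: n S => [|n IH] S /=.
  rewrite /count_in big_nil indicE.
  by case: (pselect (S 0)) => S0; [rewrite asboolT ?mem_set | rewrite asboolF ?memNset].
set a := binomial_expect _ n (fun r => _).
set b := binomial_expect _ n \1_S.
have [a0 b0] : 0 <= a /\ 0 <= b by split; apply: binomial_expect_ge0.
rewrite mulrC [(1 - _) * _]mulrC -integral_indic_setC //; apply: eq_integral => x _.
rewrite (_ : [set t | _] = [set t : n.-tuple T | S (\1_A x + count_in A t)]).
  rewrite (IH [set r | S (\1_A x + r)]); case: (pselect (A x)) => Ax.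
    by rewrite !indicE mem_set ?memNset //= ?mulr1 ?mulr0 ?addr0.
  rewrite !indicE memNset ?mem_set //= mulr0 mulr1 add0r.
  by under eq_fun do rewrite add0r.
by apply/seteqP; split => t /=; rewrite /count_in big_cons.
Qed.

End pow_measure_count.

Lemma C_class_Tbar_sub_le d (T : measurableType d) (R : realType)
    (P1 P2 : probability T R) (delta1 delta2 : R)
    (C : forall n : nat, set (set (n.-tuple T))) :
  delta1 < 1 -> delta2 < 1 -> C_class C ->
  Tbar_sub P1 delta1 C -> Tbar_sub P2 delta2 C ->
  forall A : set T, measurable A -> (P2 A <= P1 A)%E.
Proof.
move=> d1_1 d2_1 classC T1 T2 A mA.
rewrite -(probability_fineK P1 mA) -(probability_fineK P2 mA) lee_fin leNgt.
apply/negP => p12.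
have [n [c [n0 sep1 sep2]]] := binomial_threshold
  (probability_fine01 P1 mA) (probability_fine01 P2 mA) p12 d1_1 d2_1.
pose E := [set t : n.-tuple T | [set r | r <= c] (count_in R A t)].
have mE : measurable E.
  have := measurable_fun_le measurableT (@measurable_count_in _ _ R _ n mA) (measurable_cst c).
  by rewrite setTI.
have CE : C n E by apply: T1; rewrite // pow_measure_count_in // lee_fin.
have CEC : C n (~` E).
  apply: T2 => //; first exact: measurableC.
  by rewrite (pow_measure_count_in _ _ (~` [set r | r <= c])) // lee_fin.
have [_ [_ [_ meetC]]] := classC n n0.
by have [t [Et /(_ Et)]] := meetC _ _ CE CEC.
Qed.

Theorem mainTheorem6 (d : measure_display) (T : measurableType d) (R : realType)
    (P1 P2 : probability T R) (delta1 delta2 : R)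
    (C : forall n : nat, set (set (n.-tuple T))) :
  2^-1 < delta1 < 1 -> 2^-1 < delta2 < 1 ->
  C_class C ->
  Tbar_sub P1 delta1 C -> Tbar_sub P2 delta2 C ->
  forall A : set T, measurable A -> P1 A = P2 A.
Proof.
move=> /andP[_ d1_1] /andP[_ d2_1] classC T1 T2 A mA.
apply/le_anti/andP; split.
- exact: (C_class_Tbar_sub_le d2_1 d1_1 classC T2 T1).
- exact: (C_class_Tbar_sub_le d1_1 d2_1 classC T1 T2).
Qed.
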